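(* Let $n\ge3$ and let $t\ge0$ be an integer with $r_t=1$. Then $\mathcal{L}_t=\{x_1^{t+1}\partial_n\}$.
   Context: Fix an integer $n\ge 3$. A partition is a sequence $\Lambda=(\lambda_j)_{j\ge1}$ of non-negative integers with finite support; $\mathrm{wt}(\Lambda)=\sum_j j\lambda_j$; $\mathrm{Part}(k)$ is the set of partitions with $\lambda_j=0$ for $j>k$. Write $x^\Lambda=\prod_j x_j^{\lambda_j}$, $\deg(x^\Lambda)=\sum_j\lambda_j$. $\mathcal{B}=\{x^\Lambda\partial_k : 1\le k\le n,\ \Lambda\in\mathrm{Part}(k-1)\}$. For an integer $i\ge-1$, let $r_i\in\{1,\dots,n-1\}$ with $i\equiv r_i\pmod{n-1}$ and $h_i=\lfloor (i-1)/(n-1)\rfloor+1$. Define $\mathrm{WD}(x^\Lambda\partial_k)=\mathrm{wt}(\Lambda)-\deg(x^\Lambda)+n-k$ and $\mathrm{lev}_i(x^\Lambda\partial_k)=h_i\,\mathrm{WD}(x^\Lambda\partial_k)+\deg(x^\Lambda)-1$. For $i\ge-1$, $\mathcal{N}_i=\{b\in\mathcal{B}: \mathrm{lev}_j(b)\le j\text{ for some integer } -1\le j\le i\}$, and $\mathcal{L}_i=\mathcal{N}_i\setminus\mathcal{N}_{i-1}$ for $i\ge0$. *)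

From mathcomp Require Import all_boot all_order all_algebra.
Set Implicit Arguments. Unset Strict Implicit. Unset Printing Implicit Defensive.
Import Order.TTheory GRing.Theory Num.Theory.
Local Open Scope ring_scope.

(* A basis element x^Lambda d_k with Lambda in Part(k-1) is encoded as the pair
   (k, lam) where lam = [:: lambda_1; ...; lambda_(k-1)]  (lam`_(j-1) = lambda_j).
   Since lambda_j = 0 for j > k-1, this encoding is faithful and injective. *)
Definition bvec := (nat * seq nat)%type.

Definition inB (n : nat) (b : bvec) : Prop :=
  [/\ (1 <= b.1)%N, (b.1 <= n)%N & size b.2 = (b.1 - 1)%N].

Definition wt (lam : seq nat) : nat :=
  \sum_(i < size lam) (i.+1 * nth 0%N lam i)%N.

Definition degx (lam : seq nat) : nat := sumn lam.

(* r_i in {1,...,n-1} with i = r_i mod (n-1) *)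
Definition r_ (n : nat) (i : int) : int := ((i - 1) %% (n.-1)%:Z)%Z + 1.

Definition h_ (n : nat) (i : int) : int := ((i - 1) %/ (n.-1)%:Z)%Z + 1.

Definition WD (n : nat) (b : bvec) : int :=
  (wt b.2)%:Z - (degx b.2)%:Z + n%:Z - (b.1)%:Z.

Definition lev (n : nat) (i : int) (b : bvec) : int :=
  h_ n i * WD n b + (degx b.2)%:Z - 1.

Definition inN (n : nat) (i : int) (b : bvec) : Prop :=
  inB n b /\ exists j : int, -1 <= j /\ j <= i /\ lev n j b <= j.

Definition inL (n : nat) (i : int) (b : bvec) : Prop :=
  inN n i b /\ ~ inN n (i - 1) b.

Definition x1pow_dn (n t : nat) : bvec := (n, (t.+1) :: nseq (n - 2) 0%N).

From mathcomp Require Import all_boot all_order all_algebra zify ring.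
Import Order.TTheory GRing.Theory Num.Theory.
Local Open Scope ring_scope.

(* Since wt >= deg and k <= n, the weight difference WD is nonnegative on B,
   and it vanishes exactly on the elements x_1^d d_n. For those, lev_i = d - 1
   does not depend on i, so x_1^d d_n enters the filtration N at step d - 1,
   i.e. lies in L_t iff d = t + 1. Any other b has WD(b) > 0, and r_t = 1 means
   h_(t-1) = h_t - 1, so lev_(t-1)(b) = lev_t(b) - WD(b) < t: an element
   reaching N_t at step t already lies in N_(t-1), hence never in L_t. *)

Lemma sumn_nth (l : seq nat) : (\sum_(i < size l) nth 0%N l i)%N = sumn l.
Proof. by rewrite sumnE (big_nth 0%N) big_mkord. Qed.

Lemma wt_cons (x : nat) (l : seq nat) : wt (x :: l) = (x + wt l + sumn l)%N.
Proof.
rewrite /wt big_ord_recl /= mul1n -sumn_nth -addnA -big_split /=.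
by congr (_ + _)%N; apply: eq_bigr => i _; rewrite mulSn addnC.
Qed.

Lemma degx_le_wt (l : seq nat) : (degx l <= wt l)%N.
Proof.
rewrite /degx; elim: l => [|x l IH]; first by rewrite /wt big_ord0.
rewrite wt_cons /=; lia.
Qed.

Lemma wt_nseq0 (k : nat) : wt (nseq k 0%N) = 0%N.
Proof.
by elim: k => [|k IH]; [rewrite /wt big_ord0 | rewrite /= wt_cons IH sumn_nseq].
Qed.

Section WeightDifference.

Context {n : nat}.

Lemma WD_ge0 {b : bvec} : inB n b -> 0 <= WD n b.
Proof. by case: b => k l [/= _ kn _]; rewrite /WD /=; have := degx_le_wt l; lia. Qed.

Lemma WD_eq0 {b : bvec} : (1 < n)%N -> inB n b -> WD n b = 0 ->
  b = (n, degx b.2 :: nseq (n - 2) 0%N).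
Proof.
move=> n_gt1; case: b => k [|x l] [/= k_gt0 kn size_l]; rewrite /WD.
  by rewrite /wt big_ord0 /= => WD0; exfalso; lia.
rewrite /degx /= wt_cons => WD0.
have := degx_le_wt l; rewrite /degx => sumn_le.
have k_eq_n : k = n by lia.
have /eqP/natnseq0P -> : sumn l = 0%N by lia.
by rewrite sumn_nseq k_eq_n addn0; congr (_, _ :: nseq _ _); lia.
Qed.

Lemma lev_WD0 {i : int} {b : bvec} : WD n b = 0 -> lev n i b = (degx b.2)%:Z - 1.
Proof. by rewrite /lev => ->; rewrite mulr0 add0r. Qed.

Lemma h_pred_r1 {t : int} : (1 < n)%N -> r_ n t = 1 -> h_ n (t - 1) = h_ n t - 1.
Proof.
rewrite /r_ /h_ => n_gt1 r1.
have mod0 : ((t - 1) %% (n.-1)%:Z)%Z = 0 by lia.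
have := divz_eq (t - 1) (n.-1)%:Z; rewrite mod0 addr0.
set q := ((t - 1) %/ (n.-1)%:Z)%Z => tq.
have -> : t - 1 - 1 = (q - 1) * (n.-1)%:Z + ((n.-1)%:Z - 1).
  by rewrite mulrBl mul1r -tq; ring.
rewrite divzMDl; last by apply/eqP; lia.
by rewrite divz_small; [ring | apply/andP; split; lia].
Qed.

Lemma lev_pred_r1 {t : int} {b : bvec} : (1 < n)%N -> r_ n t = 1 ->
  lev n (t - 1) b = lev n t b - WD n b.
Proof. by move=> n_gt1 r1; rewrite /lev h_pred_r1 //; ring. Qed.

Lemma inN_WD0 {i : int} {b : bvec} : inB n b -> WD n b = 0 -> -1 <= i ->
  inN n i b <-> (degx b.2)%:Z - 1 <= i.
Proof.
move=> bB WD0 i_ge; split.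
  by case=> _ [j [_ [ji]]]; rewrite lev_WD0 //; lia.
by move=> deg_le; split=> //; exists i; rewrite lev_WD0.
Qed.

Lemma inL_WD0 {i : int} {b : bvec} : inB n b -> WD n b = 0 -> 0 <= i ->
  inL n i b <-> (degx b.2)%:Z = i + 1.
Proof.
move=> bB WD0 i_ge0; rewrite /inL !inN_WD0 //; [|lia|lia].
by split; [case; lia | split; lia].
Qed.

Lemma inN_pred_WD_neq0 {t : int} {b : bvec} : (1 < n)%N -> r_ n t = 1 -> 0 <= t ->
  WD n b != 0 -> inN n t b -> inN n (t - 1) b.
Proof.
move=> n_gt1 r1 t_ge0 WD_neq0 [bB [j [j_ge [jt levj]]]]; split=> //.
have [j_lt | j_ge_t] := boolP (j <= t - 1); first by exists j.
have j_eq_t : j = t by lia.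
exists (t - 1); rewrite lev_pred_r1 // -j_eq_t.
by have := WD_ge0 bB; lia.
Qed.

End WeightDifference.

Lemma inB_x1pow_dn (n t : nat) : (1 < n)%N -> inB n (x1pow_dn n t).
Proof. by move=> n_gt1; split; rewrite /= ?size_nseq; lia. Qed.

Lemma degx_x1pow_dn (n t : nat) : degx (x1pow_dn n t).2 = t.+1.
Proof. by rewrite /degx /= sumn_nseq addn0. Qed.

Lemma WD_x1pow_dn (n t : nat) : (1 < n)%N -> WD n (x1pow_dn n t) = 0.
Proof. by move=> n_gt1; rewrite /WD /= wt_cons wt_nseq0 /degx /= sumn_nseq; lia. Qed.

Theorem corollary2p10 (n t : nat) (hn : (3 <= n)%N) (ht : r_ n t%:Z = 1) :
  forall b : bvec, inL n t%:Z b <-> b = x1pow_dn n t.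
Proof.
have n_gt1 : (1 < n)%N by lia.
move=> b; split; last first.
  move=> ->; apply/inL_WD0; rewrite ?degx_x1pow_dn ?WD_x1pow_dn //; last lia.
  exact: inB_x1pow_dn.
move=> bL; have bB : inB n b by case: bL => [[]].
have [WD0 | WD_neq0] := eqVneq (WD n b) 0.
  have deg_eq : degx b.2 = t.+1.
    move: bL => /(inL_WD0 bB WD0 (le0z_nat t)) /eqP.
    by rewrite -PoszD eqz_nat addn1 => /eqP.
  by rewrite (WD_eq0 n_gt1 bB WD0) deg_eq.
by case: bL => /(inN_pred_WD_neq0 n_gt1 ht (le0z_nat t) WD_neq0).
Qed.
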